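(* For every zero-set $\mathcal Z$, $$\tfrac14|\mathcal Z|\le \gamma(\mathcal Z)\le |\mathcal Z|.$$
   Context: Let $\mathbb Z_+=\{0,1,2,\dots\}$ and, for positive integers $a,b$, let $R_{a,b}=([0,a-1]\times[0,b-1])\cap\mathbb Z_+^2$. A (discrete) zero-set is a set $\mathcal Z\subseteq\mathbb Z_+^2$ that is a union of rectangles $R_{a,b}$ (equivalently, $(u,v)\in\mathcal Z$ implies $\{0,\dots,u\}\times\{0,\dots,v\}\subseteq\mathcal Z$); here $\mathcal Z$ is finite, i.e. a Young diagram. For $A\subseteq\mathbb Z_+^2$ and $x\in\mathbb Z_+^2$ let $\mathrm{row}(x,A)$ (resp. $\mathrm{col}(x,A)$) be the number of points of $A$ on the horizontal (resp. vertical) line through $x$. The neighborhood growth transformation is $\mathcal T(A)=A\cup\{x\in\mathbb Z_+^2\setminus A:(\mathrm{row}(x,A),\mathrm{col}(x,A))\notin\mathcal Z\}$. A set $A$ spans if $\bigcup_{t\ge0}\mathcal T^t(A)=\mathbb Z_+^2$. $\gamma(\mathcal Z)$ is the minimum cardinality of a finite spanning set. *)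

From mathcomp Require Import all_boot.
Set Implicit Arguments. Unset Strict Implicit. Unset Printing Implicit Defensive.

(* Points of Z_+^2 are pairs (x.1, x.2) of naturals.  Possibly infinite subsets
   of Z_+^2 are predicates [pt -> Prop]. *)
Definition pt := (nat * nat)%type.
Definition pset := pt -> Prop.

(* A (finite, discrete) zero-set: a duplicate-free list of points that is
   downward closed (a Young diagram).  Its cardinality is [size Z]. *)
Definition zero_set (Z : seq pt) : Prop :=
  uniq Z /\
  forall u v, (u, v) \in Z -> forall i j, i <= u -> j <= v -> (i, j) \in Z.

Definition has_card (P : pset) (n : nat) : Prop :=
  exists s : seq pt, uniq s /\ size s = n /\ forall y, y \in s <-> P y.

Definition row_is (A : pset) (x : pt) (n : nat) : Prop :=
  has_card (fun y => A y /\ y.2 = x.2) n.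

Definition col_is (A : pset) (x : pt) (n : nat) : Prop :=
  has_card (fun y => A y /\ y.1 = x.1) n.

(* (row(x,A), col(x,A)) \in Z  (false if either count is infinite,
   since Z is finite). *)
Definition rowcol_in (Z : seq pt) (A : pset) (x : pt) : Prop :=
  exists u v, (u, v) \in Z /\ row_is A x u /\ col_is A x v.

Definition growT (Z : seq pt) (A : pset) : pset :=
  fun x => A x \/ (~ A x /\ ~ rowcol_in Z A x).

Definition growT_iter (Z : seq pt) (t : nat) (A : pset) : pset :=
  Nat.iter t (growT Z) A.

Definition spans (Z : seq pt) (A : seq pt) : Prop :=
  forall x : pt, exists t, growT_iter Z t (fun y => y \in A) x.

From mathcomp Require Import all_boot zify.
From Stdlib Require Import Classical ClassicalEpsilon.
Set Implicit Arguments. Unset Strict Implicit. Unset Printing Implicit Defensive.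

(* Upper bound: Z itself spans.  After k steps all rows below k are full, so a
   point of row k outside Z sees at least the Z-points of its row and k points
   of its column, a pair outside Z, and it grows at step k + 1.
   Lower bound: for a spanning A and a, b call a row (column) heavy if it holds
   more than a (b) points of A.  The points of A together with the heavy rows
   and heavy columns form a growth-closed set that is not the whole quadrant,
   so (a + #heavy columns, b + #heavy rows) lies outside Z.  With a = x/2 this
   bounds the height of column x of Z, and double counting bounds the sum of
   these heights by 4|A|. *)

Definition asbool (P : Prop) : bool :=
  if excluded_middle_informative P then true else false.

Lemma asboolP (P : Prop) : reflect P (asbool P).
Proof. by rewrite /asbool; case: excluded_middle_informative => h; constructor. Qed.

Lemma count_sumE T (a : pred T) s : count a s = \sum_(i <- s) a i.
Proof. by elim: s => [|x s IH]; rewrite ?big_nil ?big_cons //= IH. Qed.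

Lemma sum_count_exchange (I J : Type) (s : seq I) (t : seq J) (P : I -> pred J) :
  \sum_(i <- s) count (P i) t = \sum_(j <- t) count (fun i => P i j) s.
Proof.
under eq_bigr => i _ do rewrite count_sumE.
by rewrite exchange_big; under eq_bigr => j _ do rewrite -count_sumE.
Qed.

Lemma count_ltn_iota k n : count (fun x => x < k) (iota 0 n) <= k.
Proof.
rewrite -size_filter -[leqRHS](size_iota 0 k); apply: uniq_leq_size.
  by rewrite filter_uniq ?iota_uniq.
by move=> x; rewrite mem_filter !mem_iota /= => /andP[-> _].
Qed.

Lemma count_inj_mem (T1 T2 : eqType) (f : T1 -> T2) (g : pred T2) s A :
  injective f -> uniq s -> (forall i, g (f i)) ->
  count (fun i => f i \in A) s <= count g A.
Proof.
move=> injf us gf; rewrite -!size_filter -(size_map f); apply: uniq_leq_size.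
  by rewrite map_inj_uniq ?filter_uniq.
by move=> y /mapP[i]; rewrite mem_filter => /andP[iA _] ->; rewrite mem_filter gf.
Qed.

Lemma sum_count_key (T : eqType) (h : T -> nat) (s : seq nat) (A : seq T) :
  uniq s -> \sum_(j <- s) count (fun p => h p == j) A <= size A.
Proof.
move=> us; rewrite sum_count_exchange -sum1_size; apply: leq_sum => p _.
by rewrite (@eq_count _ _ (pred1 (h p))) ?count_uniq_mem ?leq_b1 // => j; exact: eq_sym.
Qed.

Lemma sum_count_ltn (T : Type) (m : nat -> nat) (h : T -> nat) k s n :
  (forall x d, m x < d -> x < k * d) ->
  \sum_(x <- iota 0 n) count (fun j => m x < h j) s <= k * \sum_(j <- s) h j.
Proof.
move=> mk; rewrite sum_count_exchange big_distrr /=; apply: leq_sum => j _.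
apply: leq_trans (count_ltn_iota _ n); apply: sub_count => x; exact: mk.
Qed.

Lemma size_le_sum_fibers (s : seq pt) (C : nat -> seq nat) n :
  uniq s -> (forall p, p \in s -> p.1 < n /\ p.2 \in C p.1) ->
  size s <= \sum_(x <- iota 0 n) size (C x).
Proof.
move=> us sC; pose F := flatten [seq [seq (x, y) | y <- C x] | x <- iota 0 n].
have -> : \sum_(x <- iota 0 n) size (C x) = size F.
  rewrite size_flatten /shape -map_comp sumnE big_map.
  by apply: eq_bigr => x _ /=; rewrite size_map.
apply: uniq_leq_size => // -[x y] /sC [xn yC]; apply/flattenP.
by exists [seq (x, y) | y <- C x]; [apply: map_f; rewrite mem_iota | apply: map_f].
Qed.

Definition coord_bound (A : seq pt) := sumn [seq (p.1 + p.2).+1 | p <- A].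

Lemma coord_boundP A p : p \in A -> p.1 < coord_bound A /\ p.2 < coord_bound A.
Proof.
rewrite /coord_bound; elim: A => [//|q A IH]; rewrite /= in_cons.
case/orP=> [/eqP->|/IH[p1 p2]]; split; try exact: ltn_addl.
  by rewrite ltn_addr // ltnS leq_addr.
by rewrite ltn_addr // ltnS leq_addl.
Qed.

Lemma has_card_leq (P : pset) n s :
  has_card P n -> uniq s -> (forall y, y \in s -> P y) -> size s <= n.
Proof.
by move=> [s' [_ [<- s'P]]] us sP; apply: uniq_leq_size => // y /sP /s'P.
Qed.

Lemma has_card_filter (P : pset) (s : seq pt) :
  uniq s -> (forall y, P y -> y \in s) -> has_card P (count (fun y => asbool (P y)) s).
Proof.
move=> us Ps; exists (filter (fun y => asbool (P y)) s).
split; first exact: filter_uniq.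
split; first exact: size_filter.
move=> y; rewrite mem_filter; split=> [/andP[/asboolP] //|Py].
by rewrite Ps // andbT; apply/asboolP.
Qed.

Lemma growT_iter_incl Z (A : pset) t y : A y -> growT_iter Z t A y.
Proof. by elim: t => [//|t IH] Ay; left; exact: IH. Qed.

Lemma growT_iter_closed Z (A S : pset) :
  (forall y, A y -> S y) ->
  (forall T : pset, (forall y, T y -> S y) -> forall y, growT Z T y -> S y) ->
  forall t y, growT_iter Z t A y -> S y.
Proof. by move=> AS cl; elim=> [|t IH] y /=; [exact: AS | apply: cl]. Qed.

Lemma zero_set_spans_self Z : zero_set Z -> spans Z Z.
Proof.
move=> [_ dZ]; pose S k := growT_iter Z k (fun y => y \in Z).
suff full k b i : b < k -> S k (i, b).
  by move=> [i b]; exists b.+1; exact: full (ltnSn b).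
elim: k b i => [//|k IH] b i; rewrite ltnS leq_eqVlt => /orP[/eqP->|/IH]; last by left.
have [|L LZ minL] := ex_minnP (_ : exists a, (a, k) \notin Z).
  by exists (coord_bound Z); apply/negP => /coord_boundP[]; rewrite ltnn.
have rowZ a : a < L -> (a, k) \in Z.
  by move=> aL; apply/negPn/negP => /minL; rewrite leqNgt aL.
case: (classic (S k (i, k))) => [|Sik]; [by left | right; split=> //].
move=> [u [v [uvZ [rowu colv]]]]; move/negP: LZ; apply; apply: (dZ _ _ uvZ).
- rewrite -(size_iota 0 L) -(size_map (fun a => (a, k))).
  apply: (has_card_leq rowu); first by rewrite map_inj_uniq ?iota_uniq // => ? ? [].
  move=> _ /mapP[a aL ->]; split=> //; apply: growT_iter_incl; apply: rowZ.
  by rewrite mem_iota in aL.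
- rewrite -(size_iota 0 k) -(size_map (fun j => (i, j))).
  apply: (has_card_leq colv); first by rewrite map_inj_uniq ?iota_uniq // => ? ? [].
  by move=> _ /mapP[j jk ->]; split=> //; apply: IH; rewrite mem_iota in jk.
Qed.

Section HeavyLines.

Variable A : seq pt.

Definition row_deg j := count (fun p : pt => p.2 == j) A.
Definition col_deg i := count (fun p : pt => p.1 == i) A.
Definition heavy_rows a := count (fun j => a < row_deg j) (iota 0 (coord_bound A)).
Definition heavy_cols b := count (fun i => b < col_deg i) (iota 0 (coord_bound A)).

Definition heavy_lines a b : pset :=
  fun y => y \in A \/ a < row_deg y.2 \/ b < col_deg y.1.

Lemma row_deg_bound j : 0 < row_deg j -> j < coord_bound A.
Proof. by rewrite -has_count => /hasP[p /coord_boundP[_ ?] /eqP <-]. Qed.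

Lemma col_deg_bound i : 0 < col_deg i -> i < coord_bound A.
Proof. by rewrite -has_count => /hasP[p /coord_boundP[? _] /eqP <-]. Qed.

Lemma heavy_lines_row_card a b (T : pset) j :
  row_deg j <= a -> (forall y, T y -> heavy_lines a b y) ->
  exists r, has_card (fun y => T y /\ y.2 = j) r /\ r <= a + heavy_cols b.
Proof.
move=> ja TS; pose s := [seq (i, j) | i <- iota 0 (coord_bound A)].
have inA : count (fun i => (i, j) \in A) (iota 0 (coord_bound A)) <= row_deg j.
  by apply: count_inj_mem; [move=> ? ? [] | exact: iota_uniq | move=> ? /=].
exists (count (fun y => asbool (T y /\ y.2 = j)) s); split.
  apply: has_card_filter; first by rewrite map_inj_uniq ?iota_uniq // => ? ? [].
  move=> [i j'] [+ /= jj]; rewrite {}jj => /TS [iA|[jh|ih]];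
    apply: map_f; rewrite mem_iota /=.
  - by have [] := coord_boundP iA.
  - by move: jh; rewrite /= ltnNge ja.
  - exact: col_deg_bound (leq_ltn_trans (leq0n _) ih).
rewrite count_map; apply: leq_trans (leq_add (leq_trans inA ja) (leqnn _)).
rewrite -count_predUI; apply: leq_trans (leq_addr _ _); apply: sub_count => i.
move=> /asboolP[/TS [iA|[jh|ih]] /= _]; rewrite /= ?iA ?ih ?orbT //.
by move: jh; rewrite /= ltnNge ja.
Qed.

Lemma heavy_lines_col_card a b (T : pset) i :
  col_deg i <= b -> (forall y, T y -> heavy_lines a b y) ->
  exists c, has_card (fun y => T y /\ y.1 = i) c /\ c <= b + heavy_rows a.
Proof.
move=> ib TS; pose s := [seq (i, j) | j <- iota 0 (coord_bound A)].
have inA : count (fun j => (i, j) \in A) (iota 0 (coord_bound A)) <= col_deg i.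
  by apply: count_inj_mem; [move=> ? ? [] | exact: iota_uniq | move=> ? /=].
exists (count (fun y => asbool (T y /\ y.1 = i)) s); split.
  apply: has_card_filter; first by rewrite map_inj_uniq ?iota_uniq // => ? ? [].
  move=> [i' j] [+ /= ii]; rewrite {}ii => /TS [jA|[jh|ih]];
    apply: map_f; rewrite mem_iota /=.
  - by have [] := coord_boundP jA.
  - exact: row_deg_bound (leq_ltn_trans (leq0n _) jh).
  - by move: ih; rewrite /= ltnNge ib.
rewrite count_map; apply: leq_trans (leq_add (leq_trans inA ib) (leqnn _)).
rewrite -count_predUI; apply: leq_trans (leq_addr _ _); apply: sub_count => j.
move=> /asboolP[/TS [jA|[jh|ih]] /= _]; rewrite /= ?jA ?jh ?orbT //.
by move: ih; rewrite /= ltnNge ib.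
Qed.

Lemma heavy_lines_growT_closed Z a b : zero_set Z ->
  (a + heavy_cols b, b + heavy_rows a) \in Z ->
  forall T : pset, (forall y, T y -> heavy_lines a b y) ->
  forall x, growT Z T x -> heavy_lines a b x.
Proof.
move=> [_ dZ] abZ T TS x [/TS //|[_ growx]].
case: (classic (heavy_lines a b x)) => // Sx; case: growx.
have ra : row_deg x.2 <= a by rewrite leqNgt; apply/negP => ?; apply: Sx; right; left.
have cb : col_deg x.1 <= b by rewrite leqNgt; apply/negP => ?; apply: Sx; right; right.
have [r [rowr ra']] := heavy_lines_row_card ra TS.
have [c [colc cb']] := heavy_lines_col_card cb TS.
by exists r, c; split; first exact: dZ abZ r c ra' cb'.
Qed.

Lemma spans_heavy_notin Z a b : zero_set Z -> spans Z A ->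
  (a + heavy_cols b, b + heavy_rows a) \notin Z.
Proof.
move=> hZ Aspans; apply/negP => abZ; pose N := coord_bound A.
have [t /(growT_iter_closed _ (heavy_lines_growT_closed hZ abZ)) SN] := Aspans (N, N).
have [NA|[Nh|Nh]] := SN (fun y (yA : y \in A) => or_introl yA).
- by have [] := coord_boundP NA; rewrite ltnn.
- by have := row_deg_bound (leq_ltn_trans (leq0n a) Nh); rewrite ltnn.
- by have := col_deg_bound (leq_ltn_trans (leq0n b) Nh); rewrite ltnn.
Qed.

Lemma spans_column_cover Z n x y : zero_set Z -> spans Z A -> (x, y) \in Z -> y < n ->
  y \in iota 0 (heavy_rows x./2) ++
        [seq b + heavy_rows x./2 | b <- iota 0 n & uphalf x < heavy_cols b].
Proof.
move=> hZ Aspans xyZ yn; rewrite mem_cat mem_iota /=.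
case: ltnP => //= fy; apply/mapP; exists (y - heavy_rows x./2); last by rewrite subnK.
rewrite mem_filter mem_iota /= add0n in fy *; apply/andP; split; last lia.
have := spans_heavy_notin (x./2) (y - heavy_rows x./2) hZ Aspans; rewrite subnK //.
case: ltnP => // gx; rewrite (hZ.2 _ _ xyZ) //.
by rewrite -[leqRHS](odd_double_half x) -addnn addnCA -uphalf_half leq_add2l.
Qed.

Lemma sum_row_deg : \sum_(j <- iota 0 (coord_bound A)) row_deg j <= size A.
Proof. exact: sum_count_key (iota_uniq _ _). Qed.

Lemma sum_col_deg : \sum_(i <- iota 0 (coord_bound A)) col_deg i <= size A.
Proof. exact: sum_count_key (iota_uniq _ _). Qed.

Lemma sum_heavy_rows_half n : \sum_(x <- iota 0 n) heavy_rows x./2 <= 2 * size A.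
Proof.
apply: leq_trans (sum_count_ltn (k := 2) _ _ _ _) _.
  by move=> x d; rewrite ltn_half_double -mul2n.
by rewrite leq_mul2l sum_row_deg orbT.
Qed.

Lemma sum_heavy_cols_uphalf n :
  \sum_(x <- iota 0 n) count (fun b => uphalf x < heavy_cols b) (iota 0 n) <= 2 * size A.
Proof.
apply: leq_trans (sum_count_ltn (k := 2) _ _ _ _) _; first by move=> x d; lia.
rewrite leq_mul2l; apply/orP; right.
apply: leq_trans (sum_count_ltn (k := 1) _ _ _ _) _; first by move=> x d; rewrite mul1n.
by rewrite mul1n sum_col_deg.
Qed.

Lemma spans_size_lower Z : zero_set Z -> spans Z A -> size Z <= 4 * size A.
Proof.
move=> hZ Aspans; pose n := coord_bound Z.
pose C x := iota 0 (heavy_rows x./2) ++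
            [seq b + heavy_rows x./2 | b <- iota 0 n & uphalf x < heavy_cols b].
apply: leq_trans (size_le_sum_fibers (C := C) (n := n) hZ.1 _) _.
  move=> [x y] xyZ; have [xn yn] := coord_boundP xyZ.
  by split=> //; exact: (spans_column_cover hZ Aspans xyZ yn).
under eq_bigr => x _ do rewrite size_cat size_iota size_map size_filter.
rewrite big_split (_ : 4 = 2 + 2) // mulnDl.
exact: leq_add (sum_heavy_rows_half _) (sum_heavy_cols_uphalf _).
Qed.

End HeavyLines.

Theorem mainTheorem1 (Z : seq pt) (hZ : zero_set Z) :
  (exists A : seq pt, uniq A /\ spans Z A /\ size A <= size Z) /\
  (forall A : seq pt, uniq A -> spans Z A -> size Z <= 4 * size A).
Proof.
split; first by exists Z; split; [exact: hZ.1 | split; [exact: zero_set_spans_self |]].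
by move=> A _; exact: spans_size_lower.
Qed.
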